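(* Let $N\ge1$, $\mathcal D=\{1,\dots,N\}$, and let $\mathcal G_{el}$ be an undirected graph on $\mathcal D$ with neighbor sets $\mathcal N_i$. For each $i$ let $C_{ti},L^C_{ti},R^C_{ti},R_{Li}>0$ and gains satisfying $k^C_{1,i}<1$, $k^C_{2,i}<R^C_{ti}$, $k^C_{3,i}>0$; for each edge let $R_{ij}=R_{ji}>0$. Fix $\bar\sigma>0$, set $\eta_i=\bar\sigma C_{ti}$, $p^C_{22,i}=\frac{L^C_{ti}\eta_i}{C_{ti}(1-k^C_{1,i})}$, $P_i^C=\mathrm{diag}\big(\eta_i,p^C_{22,i},\frac{k^C_{3,i}}{L^C_{ti}}p^C_{22,i}\big)$ and $\mathbf P^C=\mathrm{diag}(P_1^C,\dots,P_N^C)$. Then $(\mathbf F^C)^T\mathbf P^C+\mathbf P^C\mathbf F^C\le 0$.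
   Context: $e_1=(1,0,0)^T$. $F_i^C=\begin{bmatrix}0&\frac{1}{C_{ti}}&0\\ \frac{k^C_{1,i}-1}{L^C_{ti}}&\frac{k^C_{2,i}-R^C_{ti}}{L^C_{ti}}&\frac{k^C_{3,i}}{L^C_{ti}}\\ 0&-1&0\end{bmatrix}$. $\mathbf F^C\in\mathbb{R}^{3N\times3N}$ is the closed-loop matrix of the network of current-controlled units: its $(i,i)$ block is $F_i^C-\Big(\frac{1}{R_{Li}C_{ti}}+\sum_{j\in\mathcal N_i}\frac{1}{R_{ij}C_{ti}}\Big)e_1e_1^T$, its $(i,j)$ block for $j\ne i$ is $\frac{1}{R_{ij}C_{ti}}e_1e_1^T$ if $j\in\mathcal N_i$ and $0$ otherwise. Matrix inequalities are in the semidefinite sense. *)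

From HB Require Import structures.
From mathcomp Require Import all_boot all_order all_algebra.
Set Implicit Arguments. Unset Strict Implicit. Unset Printing Implicit Defensive.
Import Order.TTheory GRing.Theory Num.Theory.
Local Open Scope ring_scope.

Definition nsd (R : realFieldType) (n : nat) (M : 'M[R]_n) : Prop :=
  forall x : 'cV[R]_n, (x^T *m M *m x) 0 0 <= 0.

Definition Floc (R : realFieldType) (Ct Lt Rt k1 k2 k3 : R) : 'M[R]_3 :=
  \matrix_(r < 3, c < 3)
    match nat_of_ord r, nat_of_ord c with
    | 0, 1 => 1 / Ct
    | 1, 0 => (k1 - 1) / Lt
    | 1, 1 => (k2 - Rt) / Lt
    | 1, 2 => k3 / Lt
    | 2, 1 => -1
    | _, _ => 0
    end.

Definition E11 (R : realFieldType) : 'M[R]_3 := delta_mx 0 0.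

(* Closed-loop network matrix F^C, block (i,j) of size 3x3.
   adj is the edge relation of G_el (N_i = [pred j | adj i j]). *)
Definition FC (R : realFieldType) (N : nat) (adj : rel 'I_N)
  (Ct Lt Rt RL k1 k2 k3 : 'I_N -> R) (Rl : 'I_N -> 'I_N -> R) :=
  \mxblock_(i < N, j < N)
    (if i == j then
       Floc (Ct i) (Lt i) (Rt i) (k1 i) (k2 i) (k3 i)
       - (1 / (RL i * Ct i) + \sum_(l | adj i l) 1 / (Rl i l * Ct i)) *: E11 R
     else if adj i j then (1 / (Rl i j * Ct i)) *: E11 R else 0 : 'M[R]_3).

Definition Ploc (R : realFieldType) (sigma Ct Lt k1 k3 : R) : 'M[R]_3 :=
  let eta := sigma * Ct in
  let p22 := Lt * eta / (Ct * (1 - k1)) in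
  diag_mx (\row_(r < 3)
    match nat_of_ord r with
    | 0 => eta
    | 1 => p22
    | _ => k3 / Lt * p22
    end).

Definition PC (R : realFieldType) (N : nat) (sigma : R)
  (Ct Lt k1 k3 : 'I_N -> R) :=
  \mxblock_(i < N, j < N)
    (if i == j then Ploc sigma (Ct i) (Lt i) (k1 i) (k3 i) else 0 : 'M[R]_3).

From HB Require Import structures.
From mathcomp Require Import all_boot all_order all_algebra ring lra.

Import Order.TTheory GRing.Theory Num.Theory.
Set Implicit Arguments. Unset Strict Implicit. Unset Printing Implicit Defensive.
Local Open Scope ring_scope.

(** The quadratic form of (F^C)^T P^C + P^C F^C is twice that of P^C F^C.  In
    each local block the choice of p22 and p33 makes the off-diagonal entries of
    P_i F_i antisymmetric, so only the damping terms
    sigma (k2 - Rt) / (1 - k1) x_2^2 and -sigma x_1^2 / R_L survive.  The line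
    couplings contribute -sigma times the Laplacian form
    sum_ij g_ij (x_i^2 - x_i x_j) of the conductances g_ij = 1 / R_ij, which is
    half of sum_ij g_ij (x_i - x_j)^2 >= 0. *)

Lemma bilinear_form3E (R : comPzRingType) (A : 'M[R]_3) (y z : 'cV[R]_3) :
  (y^T *m A *m z) 0 0 = \sum_(a < 3) \sum_(b < 3) y a 0 * A a b * z b 0.
Proof.
rewrite !mxE exchange_big; apply: eq_bigr => b _; rewrite !mxE big_distrl /=.
by apply: eq_bigr => a _; rewrite !mxE.
Qed.

(* The cross terms cancel because p22 = Lt eta / (Ct (1 - k1)) and p33 = k3 p22 / Lt. *)
Lemma Ploc_Floc_quad (R : realFieldType) (sigma Ct Lt Rt k1 k2 k3 c : R) (y : 'cV[R]_3) :
  Ct != 0 -> Lt != 0 -> 1 - k1 != 0 ->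
  (y^T *m (Ploc sigma Ct Lt k1 k3 *m (Floc Ct Lt Rt k1 k2 k3 - c *: E11 R)) *m y) 0 0
  = sigma * (k2 - Rt) / (1 - k1) * y 1 0 ^+ 2 - c * (sigma * Ct) * y 0 0 ^+ 2.
Proof.
move=> hC hL hk.
rewrite bilinear_form3E !big_ord_recl big_ord0 /= !mxE /= !big_ord_recl !big_ord0 /= !mxE /=.
have -> : lift ord0 ord0 = 1 :> 'I_3 by apply/val_inj.
have -> : lift ord0 (lift ord0 ord0) = 2 :> 'I_3 by apply/val_inj.
rewrite !mulr1n !mulr0n; field; by rewrite hC hL hk.
Qed.

Lemma Ploc_E11_bilinear (R : realFieldType) (sigma Ct Lt k1 k3 s : R) (y z : 'cV[R]_3) :
  (y^T *m (Ploc sigma Ct Lt k1 k3 *m (s *: E11 R)) *m z) 0 0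
  = s * (sigma * Ct) * y 0 0 * z 0 0.
Proof.
rewrite bilinear_form3E !big_ord_recl big_ord0 /= !mxE /= !big_ord_recl !big_ord0 /= !mxE /=.
rewrite !mulr1n !mulr0n; ring.
Qed.

Lemma mxblock_quad_form (R : comPzRingType) (p : nat) (p_ : 'I_p -> nat)
    (B : forall i j, 'M[R]_(p_ i, p_ j)) (x : 'cV[R]_(\sum_i p_ i)) :
  (x^T *m \mxblock_(i, j) B i j *m x) 0 0
  = \sum_i \sum_j ((submxcol x i)^T *m B i j *m submxcol x j) 0 0.
Proof.
rewrite -{1 2}(submxcolK x) tr_mxcol mul_mxrow_mxblock mul_mxrow_mxcol summxE.
rewrite exchange_big; apply: eq_bigr => i _.
by rewrite mulmx_suml summxE.
Qed.

Lemma quad_form_trmx (R : comPzRingType) (n : nat) (A : 'M[R]_n) (x : 'cV[R]_n) :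
  (x^T *m A^T *m x) 0 0 = (x^T *m A *m x) 0 0.
Proof.
transitivity ((x^T *m A *m x)^T 0 0); last by rewrite mxE.
by rewrite !trmx_mul trmxK mulmxA.
Qed.

Lemma lyapunov_quad_form (R : comPzRingType) (n : nat) (F P : 'M[R]_n) (x : 'cV[R]_n) :
  P^T = P -> (x^T *m (F^T *m P + P *m F) *m x) 0 0 = 2 * (x^T *m (P *m F) *m x) 0 0.
Proof.
move=> symP; rewrite mulmxDr mulmxDl mxE -[in F^T *m P]symP -trmx_mul quad_form_trmx.
by rewrite mulr2n mulrDl mul1r.
Qed.

Lemma Ploc_sym (R : realFieldType) (sigma Ct Lt k1 k3 : R) :
  (Ploc sigma Ct Lt k1 k3)^T = Ploc sigma Ct Lt k1 k3.
Proof. exact: tr_diag_mx. Qed.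

Lemma PC_mxdiag (R : realFieldType) (N : nat) (sigma : R) (Ct Lt k1 k3 : 'I_N -> R) :
  PC sigma Ct Lt k1 k3 = \mxdiag_i Ploc sigma (Ct i) (Lt i) (k1 i) (k3 i).
Proof. by apply: eq_mxblock => i j; case: eqVneq => // _; rewrite conform_mx_id. Qed.

Lemma laplacian_quad_ge0 (R : realFieldType) (N : nat) (a : 'I_N -> 'I_N -> R) (u : 'I_N -> R) :
  (forall i j, a i j = a j i) -> (forall i j, 0 <= a i j) ->
  0 <= \sum_i \sum_j a i j * (u i ^+ 2 - u i * u j).
Proof.
move=> a_sym a_ge0; set S := \sum_i _.
have twiceS : S + S = \sum_i \sum_j a i j * (u i - u j) ^+ 2.
  rewrite {2}/S exchange_big -big_split /=; apply: eq_bigr => i _.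
  rewrite -big_split /=; apply: eq_bigr => j _; rewrite (a_sym j i); ring.
have : 0 <= S + S.
  by rewrite twiceS; do 2!(apply: sumr_ge0 => ? _); rewrite mulr_ge0 ?sqr_ge0.
lra.
Qed.

Section Network.

Variables (R : realFieldType) (N : nat) (adj : rel 'I_N).
Variables (Ct Lt Rt RL k1 k2 k3 : 'I_N -> R) (Rl : 'I_N -> 'I_N -> R) (sigma : R).
Hypothesis adj_irr : forall i, ~~ adj i i.
Hypotheses (hCt : forall i, 0 < Ct i) (hLt : forall i, 0 < Lt i) (hRL : forall i, 0 < RL i).
Hypotheses (hk1 : forall i, k1 i < 1) (hk2 : forall i, k2 i < Rt i).
Hypothesis hRl_pos : forall i j, adj i j -> 0 < Rl i j.
Hypothesis hsigma : 0 < sigma.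

Definition conductance i j := if adj i j then 1 / Rl i j else 0.

Definition Fblock i j : 'M[R]_3 :=
  if i == j then
    Floc (Ct i) (Lt i) (Rt i) (k1 i) (k2 i) (k3 i)
    - (1 / (RL i * Ct i) + \sum_(l | adj i l) 1 / (Rl i l * Ct i)) *: E11 R
  else if adj i j then (1 / (Rl i j * Ct i)) *: E11 R else 0.

Lemma FC_mxblock : FC adj Ct Lt Rt RL k1 k2 k3 Rl = \mxblock_(i, j) Fblock i j.
Proof. by []. Qed.

Lemma Fblock_row_quad_form (y : 'I_N -> 'cV[R]_3) i :
  \sum_j ((y i)^T *m (Ploc sigma (Ct i) (Lt i) (k1 i) (k3 i) *m Fblock i j) *m y j) 0 0
  = sigma * (k2 i - Rt i) / (1 - k1 i) * y i 1 0 ^+ 2 - sigma / RL i * y i 0 0 ^+ 2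
    - sigma * \sum_j conductance i j * (y i 0 0 ^+ 2 - y i 0 0 * y j 0 0).
Proof.
have Ct_neq0 : Ct i != 0 := lt0r_neq0 (hCt i).
have Rl_neq0 j : adj i j -> Rl i j != 0 by move/hRl_pos/lt0r_neq0.
have coupling : \sum_(j | j != i)
    ((y i)^T *m (Ploc sigma (Ct i) (Lt i) (k1 i) (k3 i) *m Fblock i j) *m y j) 0 0
    = sigma * \sum_j conductance i j * (y i 0 0 * y j 0 0).
  rewrite mulr_sumr [RHS](bigD1 i) //= /conductance (negbTE (adj_irr i)) mul0r mulr0 add0r.
  apply: eq_bigr => j; rewrite /Fblock eq_sym => /negbTE ->.
  case: ifP => [/Rl_neq0 Rl_ij|_]; last by rewrite !mulmx0 mul0mx mxE !mul0r mulr0.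
  by rewrite Ploc_E11_bilinear; field; rewrite Ct_neq0 Rl_ij.
have degree : \sum_(l | adj i l) 1 / (Rl i l * Ct i) = (\sum_j conductance i j) / Ct i.
  rewrite big_mkcond mulr_suml; apply: eq_bigr => j _; rewrite /conductance.
  case: ifP => [/Rl_neq0 Rl_ij|_]; last by rewrite mul0r.
  by field; rewrite Ct_neq0 Rl_ij.
have split_lap : \sum_j conductance i j * (y i 0 0 ^+ 2 - y i 0 0 * y j 0 0)
    = (\sum_j conductance i j) * y i 0 0 ^+ 2 - \sum_j conductance i j * (y i 0 0 * y j 0 0).
  by rewrite mulr_suml -sumrB; apply: eq_bigr => j _; rewrite mulrBr.
rewrite (bigD1 i) //= coupling /Fblock eqxx Ploc_Floc_quad ?lt0r_neq0 ?subr_gt0 //.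
rewrite degree split_lap; field.
by rewrite Ct_neq0 lt0r_neq0 //= subr_eq0 gt_eqF.
Qed.

Lemma Fblock_row_quad_le (y : 'I_N -> 'cV[R]_3) i :
  \sum_j ((y i)^T *m (Ploc sigma (Ct i) (Lt i) (k1 i) (k3 i) *m Fblock i j) *m y j) 0 0
  <= - sigma * \sum_j conductance i j * (y i 0 0 ^+ 2 - y i 0 0 * y j 0 0).
Proof.
rewrite Fblock_row_quad_form.
have internal_le0 : sigma * (k2 i - Rt i) / (1 - k1 i) * y i 1 0 ^+ 2 <= 0.
  rewrite mulr_le0_ge0 ?sqr_ge0 // mulr_le0_ge0 ?invr_ge0 ?subr_ge0 ?ltW //.
  by rewrite pmulr_rlt0 // subr_lt0.
have load_ge0 : 0 <= sigma / RL i * y i 0 0 ^+ 2.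
  by rewrite mulr_ge0 ?sqr_ge0 // divr_ge0 ?ltW.
lra.
Qed.

Hypothesis adj_sym : forall i j, adj i j = adj j i.
Hypothesis hRl_sym : forall i j, adj i j -> Rl i j = Rl j i.

Lemma conductance_sym i j : conductance i j = conductance j i.
Proof. by rewrite /conductance adj_sym; case: ifP => // /hRl_sym ->. Qed.

Lemma conductance_ge0 i j : 0 <= conductance i j.
Proof. by rewrite /conductance; case: ifP => // /hRl_pos Rl_gt0; rewrite divr_ge0 ?ltW. Qed.

End Network.

Theorem proposition3 (R : realFieldType) (N : nat) (hN : (1 <= N)%N)
  (adj : rel 'I_N)
  (adj_sym : forall i j, adj i j = adj j i)
  (adj_irr : forall i, ~~ adj i i)
  (Ct Lt Rt RL k1 k2 k3 : 'I_N -> R) (Rl : 'I_N -> 'I_N -> R)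
  (hCt : forall i, 0 < Ct i) (hLt : forall i, 0 < Lt i)
  (hRt : forall i, 0 < Rt i) (hRL : forall i, 0 < RL i)
  (hk1 : forall i, k1 i < 1) (hk2 : forall i, k2 i < Rt i)
  (hk3 : forall i, 0 < k3 i)
  (hRl_sym : forall i j, adj i j -> Rl i j = Rl j i)
  (hRl_pos : forall i j, adj i j -> 0 < Rl i j)
  (sigma : R) (hsigma : 0 < sigma) :
  nsd ((FC adj Ct Lt Rt RL k1 k2 k3 Rl)^T *m PC sigma Ct Lt k1 k3
       + PC sigma Ct Lt k1 k3 *m FC adj Ct Lt Rt RL k1 k2 k3 Rl).
Proof.
move=> x; set y := submxcol x; set u := fun i => y i 0 0.
rewrite FC_mxblock PC_mxdiag lyapunov_quad_form; last first.
  by rewrite tr_mxdiag; apply/eq_mxdiag => i; rewrite Ploc_sym.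
rewrite mul_mxdiag_mxblock mxblock_quad_form -/y.
have rows_le : \sum_i \sum_j ((y i)^T *m (Ploc sigma (Ct i) (Lt i) (k1 i) (k3 i)
                                 *m Fblock adj Ct Lt Rt RL k1 k2 k3 Rl i j) *m y j) 0 0
    <= - sigma * \sum_i \sum_j conductance adj Rl i j * (u i ^+ 2 - u i * u j).
  by rewrite mulr_sumr; apply: ler_sum => i _; apply: Fblock_row_quad_le.
have lap_ge0 := laplacian_quad_ge0 u (conductance_sym adj_sym hRl_sym)
  (conductance_ge0 hRl_pos).
nra.
Qed.
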